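(* For every $\lambda\in\mathbb{C}$, $$\det\left(\mathbf{P}_2^{-1}\mathbf{K}-\lambda I_{2m+n}\right)=(1-\lambda)^{2m}\det\left(B^{-1}H-\lambda I_n\right).$$ Consequently $\mathbf{P}_2^{-1}\mathbf{K}$ has the same eigenvalues (with algebraic multiplicities) as $\mathbf{P}_4^{-1}\mathbf{K}$: the value $1$ with multiplicity (at least) $2m$ together with the eigenvalues of $B^{-1}H$.
   Context: Let $m,n\ge 1$. Let $R_u\in\mathbb{R}^{m\times m}$ be invertible, $R_z\in\mathbb{R}^{m\times n}$, $L_{uu}\in\mathbb{R}^{m\times m}$ symmetric, $L_{uz}\in\mathbb{R}^{m\times n}$, $L_{zu}:=L_{uz}^T$, $L_{zz}\in\mathbb{R}^{n\times n}$ symmetric, and $B\in\mathbb{R}^{n\times n}$ invertible. Write $R_u^{-T}:=(R_u^{-1})^T$. Define the reduced Hessian $H:=L_{zz}-L_{zu}R_u^{-1}R_z-R_z^TR_u^{-T}L_{uz}+R_z^TR_u^{-T}L_{uu}R_u^{-1}R_z$. The KKT matrix is $\mathbf{K}:=\begin{bmatrix} L_{uu} & L_{uz} & R_u^T\\ L_{zu} & L_{zz} & R_z^T\\ R_u & R_z & 0\end{bmatrix}$ and $\mathbf{P}_2:=\begin{bmatrix} 0 & 0 & R_u^T\\ 0 & B & R_z^T\\ R_u & R_z & 0\end{bmatrix}$. $\mathbf{P}_4:=\mathbf{K}_1\mathbf{K}_2$ with $\mathbf{K}_1=\begin{bmatrix} L_{uu}R_u^{-1} & 0 & I_m\\ L_{zu}R_u^{-1}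 & I_n & R_z^TR_u^{-T}\\ I_m & 0 & 0\end{bmatrix}$, $\mathbf{K}_2=\begin{bmatrix} R_u & R_z & 0\\ 0 & B & 0\\ 0 & L_{uz}-L_{uu}R_u^{-1}R_z & R_u^T\end{bmatrix}$. *)

(* Real matrices over an arbitrary real closed field R
   (which includes the reals); complex numbers are R[i]. *)
From mathcomp Require Import all_boot all_order all_algebra.
From mathcomp.real_closed Require Export complex.
Set Implicit Arguments. Unset Strict Implicit. Unset Printing Implicit Defensive.
Import GRing.Theory Num.Theory.
Local Open Scope ring_scope.

Section Defs.
Variables (R : comUnitRingType) (m n : nat).
Variables (Ru : 'M[R]_m) (Rz : 'M[R]_(m, n)) (Luu : 'M[R]_m) (Luz : 'M[R]_(m, n))
          (Lzz : 'M[R]_n) (B : 'M[R]_n).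

Definition Lzu := Luz^T.
Definition RuinvT := (invmx Ru)^T.

Definition redHess : 'M[R]_n :=
  Lzz - Lzu *m invmx Ru *m Rz - Rz^T *m RuinvT *m Luz
  + Rz^T *m RuinvT *m Luu *m invmx Ru *m Rz.

(* 3x3 block matrices with block sizes (m, n, m), encoded as
   block_mx over the splitting (m + n) + m. *)
Definition KKT : 'M[R]_(m + n + m) :=
  block_mx (block_mx Luu Luz Lzu Lzz) (col_mx Ru^T Rz^T) (row_mx Ru Rz) 0.

Definition P2 : 'M[R]_(m + n + m) :=
  block_mx (block_mx 0 0 0 B) (col_mx Ru^T Rz^T) (row_mx Ru Rz) 0.

Definition K1 : 'M[R]_(m + n + m) :=
  block_mx (block_mx (Luu *m invmx Ru) 0 (Lzu *m invmx Ru) 1%:M)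
           (col_mx 1%:M (Rz^T *m RuinvT)) (row_mx 1%:M 0) 0.

Definition K2 : 'M[R]_(m + n + m) :=
  block_mx (block_mx Ru Rz 0 B) (col_mx 0 0)
           (row_mx 0 (Luz - Luu *m invmx Ru *m Rz)) Ru^T.

Definition P4 : 'M[R]_(m + n + m) := K1 *m K2.
End Defs.

(* Write C = [Ru Rz] for the constraint Jacobian (Ru invertible) and
   Z = [-Ru^-1 Rz; I] for the induced basis of its null space.  Every matrix
   considered is a saddle-point matrix  S(A, c) = [A  c C^T; c C  0]  whose
   (u,z)-block A is an arbitrary (m+n)-square matrix; its reduced matrix is
   Z^T A Z, and the reduced Hessian H is the reduced matrix of the Hessian.

   1. Block elimination: with an explicit invertible left factor (elimination
      followed by a block swap) and a unit upper-triangular right factor, S(A, c) becomes block lower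
      triangular with diagonal (c Ru, Z^T A Z, c Ru^T); hence
      det S(A, c) = c^(2m) det(Ru)^2 det(Z^T A Z) up to a fixed unit.
   2. Since S(A,1) - lam S(P,1) = S(A - lam P, 1 - lam) and reduction is
      linear, this gives for any preconditioner S(P, 1) with Z^T P Z invertible
        det(S(P,1)^-1 S(A,1) - lam) = (1-lam)^(2m) det((Z^T P Z)^-1 Z^T A Z - lam).
   3. KKT, P2 and P4 are saddle-point matrices; the reduced matrix of KKT is H
      and that of P2 and P4 is B.  All identities hold over any commutative
      ring with units, so they apply to the complexified matrices and, with
      lam = 'X over polynomials, to the characteristic polynomials. *)

From mathcomp Require Import all_boot all_order all_algebra.
From mathcomp.real_closed Require Import complex.
From mathcomp Require Import ring.
Import GRing.Theory.
Local Open Scope ring_scope.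
Set Implicit Arguments. Unset Strict Implicit. Unset Printing Implicit Defensive.

Ltac block_simpl := repeat progress rewrite ?mulmx_block ?mul_block_col
  ?mul_row_block ?mul_row_col ?mul_col_row
  ?(mul0mx, mulmx0, mul1mx, mulmx1, add0r, addr0, mulNmx, mulmxN, row_mx0,
    col_mx0, block_mx0, add_block_mx, add_col_mx, add_row_mx, addNr, addrN, opprK).

Lemma pencil_det (S : comUnitRingType) k (P A : 'M[S]_k) (lam : S) :
  P \in unitmx -> \det (invmx P *m A - lam%:M) * \det P = \det (A - lam *: P).
Proof.
move=> P_unit.
have -> : invmx P *m A - lam%:M = invmx P *m (A - lam *: P).
  by rewrite mulmxBr -scalemxAr mulVmx // scalemx1.
by rewrite det_mulmx det_inv mulrC mulVKr // -unitmxE.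
Qed.

Section SaddlePoint.
Variables (S : comUnitRingType) (m n : nat).
Variables (Ru : 'M[S]_m) (Rz : 'M[S]_(m, n)).
Hypothesis Ru_unit : Ru \in unitmx.

Let N := invmx Ru *m Rz.

Definition nullZ : 'M[S]_(m + n, n) := col_mx (- N) 1%:M.

Definition reduced (A : 'M[S]_(m + n)) : 'M[S]_n := nullZ^T *m A *m nullZ.

Definition saddle (A : 'M[S]_(m + n)) (c : S) : 'M[S]_(m + n + m) :=
  block_mx A (c *: (row_mx Ru Rz)^T) (c *: row_mx Ru Rz) 0.

Lemma reduced_block (Auu : 'M[S]_m) (Auz : 'M[S]_(m, n)) (Azu : 'M[S]_(n, m))
    (Azz : 'M[S]_n) :
  reduced (block_mx Auu Auz Azu Azz)
  = Azz - N^T *m Auz - (Azu - N^T *m Auu) *m N.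
Proof.
rewrite /reduced /nullZ tr_col_mx trmx1 linearN /= mul_row_block mul_row_col.
by rewrite !mulNmx !mulmxN !mul1mx !mulmx1 addrC (addrC (- _)) (addrC (- _)).
Qed.

Lemma reduced_shift (Auu : 'M[S]_m) (Auz : 'M[S]_(m, n)) (Azu : 'M[S]_(n, m))
    (Azz D : 'M[S]_n) :
  reduced (block_mx Auu Auz Azu (Azz + D)) = reduced (block_mx Auu Auz Azu Azz) + D.
Proof. by rewrite !reduced_block (addrAC Azz) [LHS]addrAC. Qed.

Lemma reduced_diag (D : 'M[S]_n) : reduced (block_mx 0 0 0 D) = D.
Proof. by rewrite reduced_block !mulmx0 !subr0 mul0mx subr0. Qed.

Lemma reducedB (A P : 'M[S]_(m + n)) (lam : S) :
  reduced (A - lam *: P) = reduced A - lam *: reduced P.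
Proof. by rewrite /reduced mulmxBr mulmxBl -scalemxAr -scalemxAl. Qed.

Lemma saddleB (A P : 'M[S]_(m + n)) (lam : S) :
  saddle A 1 - lam *: saddle P 1 = saddle (A - lam *: P) (1 - lam).
Proof.
rewrite /saddle scale_block_mx scaler0 !scalerA mulr1 opp_block_mx oppr0.
by rewrite add_block_mx addr0 !scalerBl !scale1r.
Qed.

Lemma Ru_N : Ru *m N = Rz.
Proof. by rewrite mulmxA mulmxV // mul1mx. Qed.

Lemma NT_RuT : N^T *m Ru^T = Rz^T.
Proof. by rewrite -trmx_mul Ru_N. Qed.

(* Row elimination: eliminate Rz^T against Ru^T, then swap the two m-blocks. *)
Definition elimL : 'M[S]_(m + n + m) :=
  block_mx (block_mx 0 0 (- N^T) 1%:M) (col_mx 1%:M 0) (row_mx 1%:M 0) 0.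

(* Column elimination of Rz against Ru. *)
Definition elimR : 'M[S]_(m + n + m) :=
  block_mx (block_mx 1%:M (- N) 0 1%:M) 0 0 1%:M.

Lemma elimL_unit : \det elimL \is a GRing.unit.
Proof.
have elimL_inv : elimL *m block_mx (block_mx 0 0 0 1%:M) (col_mx 1%:M N^T)
                                   (row_mx 1%:M 0) 0 = 1%:M.
  by rewrite /elimL; block_simpl; rewrite -!scalar_mx_block.
by rewrite -unitmxE; case: (mulmx1_unit elimL_inv).
Qed.

Lemma det_elimR : \det elimR = 1.
Proof. by rewrite /elimR !det_ublock !det1 !mulr1. Qed.

Lemma elim_saddle (Auu : 'M[S]_m) (Auz : 'M[S]_(m, n)) (Azu : 'M[S]_(n, m))
    (Azz : 'M[S]_n) (c : S) :
  elimL *m saddle (block_mx Auu Auz Azu Azz) c *m elimR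
  = block_mx (block_mx (c *: Ru) 0 (Azu - N^T *m Auu)
                       (reduced (block_mx Auu Auz Azu Azz)))
             0 (row_mx Auu (Auz - Auu *m N)) (c *: Ru^T).
Proof.
rewrite /elimL /saddle /elimR tr_row_mx scale_col_mx scale_row_mx; block_simpl.
rewrite -!scalemxAl -!scalemxAr Ru_N NT_RuT !addNr col_mx0 reduced_block.
congr (block_mx (block_mx _ _ _ _) _ (row_mx _ _) _);
  by rewrite addrC // (addrC (- _)) (addrC (- _)).
Qed.

Lemma det_saddle A c :
  \det (saddle A c) * \det elimL = c ^+ (2 * m) * \det Ru ^+ 2 * \det (reduced A).
Proof.
have := congr1 determinant (elim_saddle (ulsubmx A) (ursubmx A) (dlsubmx A) (drsubmx A) c).
rewrite submxK !det_mulmx det_elimR mulr1 !det_lblock !detZ det_tr mulrC => ->.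
by rewrite mul2n -addnn exprD; ring.
Qed.

Theorem saddle_pencil A P (lam : S) :
  reduced P \in unitmx ->
  \det (invmx (saddle P 1) *m saddle A 1 - lam%:M)
  = (1 - lam) ^+ (2 * m) * \det (invmx (reduced P) *m reduced A - lam%:M).
Proof.
move=> redP_unit.
have detP := det_saddle P 1; rewrite expr1n mul1r in detP.
have detPL_unit : \det (saddle P 1) * \det elimL \is a GRing.unit.
  by rewrite detP !unitrM -!unitmxE Ru_unit redP_unit.
have P_unit : saddle P 1 \in unitmx.
  by move: detPL_unit; rewrite unitrM unitmxE => /andP[].
apply: (mulIr detPL_unit); rewrite mulrA pencil_det // saddleB detP det_saddle.
by rewrite reducedB -pencil_det //; ring.
Qed.

End SaddlePoint.

Section Preconditioners.
Variables (S : comUnitRingType) (m n : nat).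
Variables (Ru : 'M[S]_m) (Rz : 'M[S]_(m, n)) (Luu : 'M[S]_m) (Luz : 'M[S]_(m, n))
          (Lzz : 'M[S]_n) (B : 'M[S]_n).
Hypothesis Ru_unit : Ru \in unitmx.

Let N := invmx Ru *m Rz.
Local Notation H := (redHess Ru Rz Luu Luz Lzz).
Local Notation Hess Azz := (block_mx Luu Luz (Lzu Luz) Azz).

Lemma KKT_saddle : KKT Ru Rz Luu Luz Lzz = saddle Ru Rz (Hess Lzz) 1.
Proof. by rewrite /saddle tr_row_mx !scale1r. Qed.

Lemma P2_saddle : P2 Ru Rz B = saddle Ru Rz (block_mx 0 0 0 B) 1.
Proof. by rewrite /saddle tr_row_mx !scale1r. Qed.

Lemma reduced_KKT : reduced Ru Rz (Hess Lzz) = H.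
Proof.
rewrite reduced_block /redHess /RuinvT -trmx_mul -!mulmxA -/N mulmxBl opprB.
rewrite -mulmxA [LHS]addrA [LHS]addrAC; congr (_ + _); exact: addrAC.
Qed.

(* The part of H not coming from Lzz, which P4 replaces by B. *)
Lemma hessian_correction : Lzz - H = Lzu Luz *m N + N^T *m (Luz - Luu *m N).
Proof.
rewrite -reduced_KKT reduced_block -addrA -opprD subKr mulmxBl mulmxBr.
by rewrite -!mulmxA -/N addrCA.
Qed.

Lemma P4_saddle : P4 Ru Rz Luu Luz B = saddle Ru Rz (Hess (Lzz + (B - H))) 1.
Proof.
rewrite /P4 /K1 /K2 /saddle /Lzu /RuinvT tr_row_mx !scale1r; block_simpl.
rewrite mul_col_mx mul1mx -!mulmxA mulVmx // !mulmx1 -/N subrKC.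
rewrite -(trmx_mul Ru) mulmxV // trmx1 mulmx1 mulmxA -trmx_mul -/N.
by rewrite (addrCA Lzz) hessian_correction addrAC addrC.
Qed.

Hypothesis B_unit : B \in unitmx.

Theorem pencil_P2 (lam : S) :
  \det (invmx (P2 Ru Rz B) *m KKT Ru Rz Luu Luz Lzz - lam%:M)
  = (1 - lam) ^+ (2 * m) * \det (invmx B *m H - lam%:M).
Proof.
by rewrite P2_saddle KKT_saddle saddle_pencil // reduced_diag // reduced_KKT.
Qed.

Theorem pencil_P4 (lam : S) :
  \det (invmx (P4 Ru Rz Luu Luz B) *m KKT Ru Rz Luu Luz Lzz - lam%:M)
  = (1 - lam) ^+ (2 * m) * \det (invmx B *m H - lam%:M).
Proof.
by rewrite P4_saddle KKT_saddle saddle_pencil // reduced_shift reduced_KKT subrKC.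
Qed.
End Preconditioners.

(* The matrices of the problem commute with ring morphisms, e.g. the embedding
   of R into R[i] or into polynomials. *)
Section MapMatrices.
Variables (F : fieldType) (S : comUnitRingType) (f : {rmorphism F -> S}).
Variables (m n : nat).
Variables (Ru : 'M[F]_m) (Rz : 'M[F]_(m, n)) (Luu : 'M[F]_m) (Luz : 'M[F]_(m, n))
          (Lzz : 'M[F]_n) (B : 'M[F]_n).

Lemma map_P2 : map_mx f (P2 Ru Rz B) = P2 (map_mx f Ru) (map_mx f Rz) (map_mx f B).
Proof.
by rewrite /P2 (map_block_mx f (block_mx _ _ _ _)) map_block_mx map_col_mx map_row_mx
  !map_mx0 !map_trmx.
Qed.

Lemma map_KKT :
  map_mx f (KKT Ru Rz Luu Luz Lzz) =
  KKT (map_mx f Ru) (map_mx f Rz) (map_mx f Luu) (map_mx f Luz) (map_mx f Lzz).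
Proof.
by rewrite /KKT /Lzu (map_block_mx f (block_mx _ _ _ _)) map_block_mx map_col_mx
  map_row_mx !map_mx0 !map_trmx.
Qed.

Lemma map_P4 :
  map_mx f (P4 Ru Rz Luu Luz B) =
  P4 (map_mx f Ru) (map_mx f Rz) (map_mx f Luu) (map_mx f Luz) (map_mx f B).
Proof.
rewrite /P4 /K1 /K2 /Lzu /RuinvT map_mxM (map_block_mx f (block_mx _ _ _ _))
  (map_block_mx f (block_mx _ _ _ _)) !map_block_mx !map_col_mx !map_row_mx.
by rewrite ?map_mx0 ?map_mx1 ?map_mxB ?map_mxM -?map_trmx ?map_invmx.
Qed.

Lemma map_redHess :
  map_mx f (redHess Ru Rz Luu Luz Lzz) =
  redHess (map_mx f Ru) (map_mx f Rz) (map_mx f Luu) (map_mx f Luz) (map_mx f Lzz).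
Proof.
by rewrite /redHess /Lzu /RuinvT ?(map_mxD, map_mxB, map_mxN) ?map_mxM
  -?map_trmx ?map_invmx.
Qed.
End MapMatrices.

Lemma char_poly_det (F : fieldType) k (A : 'M[F]_k) :
  char_poly A = (-1) ^+ k * \det (map_mx polyC A - 'X%:M).
Proof. by rewrite /char_poly /char_poly_mx -opprB -scaleN1r detZ. Qed.

Local Open Scope complex_scope.

Theorem mainTheorem7 (R : rcfType) (m n : nat)
  (Ru : 'M[R]_m) (Rz : 'M[R]_(m, n)) (Luu : 'M[R]_m) (Luz : 'M[R]_(m, n))
  (Lzz : 'M[R]_n) (B : 'M[R]_n) :
  Ru \in unitmx -> B \in unitmx -> Luu^T = Luu -> Lzz^T = Lzz ->
  (forall lambda : R[i],
     \det (map_mx (real_complex R) (invmx (P2 Ru Rz B) *m KKT Ru Rz Luu Luz Lzz)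
           - lambda%:M)
     = (1 - lambda) ^+ (2 * m)
       * \det (map_mx (real_complex R) (invmx B *m redHess Ru Rz Luu Luz Lzz)
               - lambda%:M))
  /\ char_poly (invmx (P2 Ru Rz B) *m KKT Ru Rz Luu Luz Lzz)
     = char_poly (invmx (P4 Ru Rz Luu Luz B) *m KKT Ru Rz Luu Luz Lzz).
Proof.
move=> Ru_unit B_unit _ _; split.
  move=> lam; rewrite !map_mxM !map_invmx map_P2 map_KKT map_redHess.
  by rewrite pencil_P2 // map_unitmx.
rewrite !char_poly_det !map_mxM !map_invmx map_P2 map_P4 map_KKT.
by rewrite pencil_P2 ?pencil_P4 // map_unitmx.
Qed.
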